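(* Let $0<\Delta<1$, let $\mathcal{X}_\Delta=\{X\in\mathcal{X}:\mu_X(\{x\})<\Delta\text{ for all }x\in X\}$, and define $r_\Delta\colon\mathcal{X}_\Delta\to\mathbb{R}_+$ by $r_\Delta(X)=\int_0^{(\Delta+1)/2}\mathrm{diam}(X;s)\,ds$. Then $r_\Delta$ is continuous on $\mathcal{X}_\Delta$ with respect to the box topology.
   Context: mm-spaces are triples $(X,d_X,\mu_X)$ with $(X,d_X)$ complete separable metric and $\mu_X$ a Borel probability measure, with $X=\operatorname{supp}\mu_X$. $\mathcal{X}$ is the set of their isomorphism classes under measure-preserving isometries of supports. Box distance: $\square(X,Y)$ is the infimum of $\varepsilon\ge0$ such that there exist Borel maps $\varphi,\psi$ from $[0,1)$ pushing Lebesgue measure to $\mu_X,\mu_Y$ and a Borel $I_0$ of measure $\ge1-\varepsilon$ with $|d_X(\varphi(s),\varphi(t))-d_Y(\psi(s),\psi(t))|\le\varepsilon$ on $I_0$. It induces the box topology. Partial diameter: $\mathrm{diam}(X;\alpha)=\inf\{\mathrm{diam}A: A\subset X\text{ Borel},\ \mu_X(A)\ge\alpha\}$. For $X\in\mathcal{X}_\Delta$ one has $0<r_\Delta(X)<\infty$. *)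

From HB Require Import structures.
From mathcomp Require Import all_boot all_order all_algebra.
From mathcomp Require Import all_classical all_reals all_analysis.
Set Implicit Arguments. Unset Strict Implicit. Unset Printing Implicit Defensive.
Import Order.TTheory GRing.Theory Num.Theory.
Local Open Scope classical_set_scope.
Local Open Scope ring_scope.

Section MM.
Context {R : realType} {d : measure_display} {T : measurableType d}.
Variable dist : T -> T -> R.

Definition dball (x : T) (r : R) : set T := [set y | dist x y < r].
Definition dopen (U : set T) : Prop :=
  forall x, U x -> exists2 r : R, 0 < r & dball x r `<=` U.
Definition is_metric : Prop :=
  [/\ forall x y, dist x y = 0 <-> x = y,
      forall x y, dist x y = dist y x &
      forall x y z, dist x z <= dist x y + dist y z].
Definition dcomplete : Prop :=
  forall u : nat -> T,
    (forall e : R, 0 < e -> exists N, forall m n, (N <= m)%N -> (N <= n)%N -> dist (u m) (u n) < e) ->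
    exists l, forall e : R, 0 < e -> exists N, forall n, (N <= n)%N -> dist (u n) l < e.
Definition dseparable : Prop :=
  exists D : set T, countable D /\
    forall x (e : R), 0 < e -> exists2 y, D y & dist x y < e.
Definition borel_of_dist : Prop := (@measurable d T) = <<s dopen >>.

Variable mu : probability T R.
Definition full_support : Prop :=
  forall x (r : R), 0 < r -> (0 < mu (dball x r))%E.

Definition is_mmspace : Prop :=
  [/\ is_metric, dcomplete, dseparable, borel_of_dist & full_support].

Definition in_XDelta (Delta : R) : Prop :=
  forall x, (mu [set x] < EFin Delta)%E.

Definition ediam (A : set T) : \bar R :=
  ereal_sup ([set (dist x y)%:E | x in A & y in A] `|` [set 0%E]).

Definition pdiam (alpha : R) : \bar R :=
  ereal_inf [set ediam A | A in [set A | measurable A /\ (alpha%:E <= mu A)%E]].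

Definition rDelta (Delta : R) : \bar R :=
  (\int[@lebesgue_measure R]_(s in `[0%R, ((Delta + 1) / 2)%R]) pdiam s)%E.

Definition parametrization (phi : R -> T) : Prop :=
  measurable_fun (`[0, 1[ : set R) phi /\
  forall B, measurable B -> @lebesgue_measure R (`[0, 1[ `&` phi @^-1` B) = mu B.
End MM.

Definition box_cond {R : realType} {dX dY : measure_display}
  {TX : measurableType dX} {TY : measurableType dY}
  (distX : TX -> TX -> R) (muX : probability TX R)
  (distY : TY -> TY -> R) (muY : probability TY R) (eps : R) : Prop :=
  0 <= eps /\
  exists (phi : R -> TX) (psi : R -> TY) (I0 : set R),
    [/\ parametrization muX phi, parametrization muY psi,
        measurable I0 /\ I0 `<=` `[0, 1[,
        ((1 - eps)%:E <= @lebesgue_measure R I0)%E &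
        forall s t, I0 s -> I0 t ->
          `|distX (phi s) (phi t) - distY (psi s) (psi t)| <= eps].

Definition box_dist {R : realType} {dX dY : measure_display}
  {TX : measurableType dX} {TY : measurableType dY}
  (distX : TX -> TX -> R) (muX : probability TX R)
  (distY : TY -> TY -> R) (muY : probability TY R) : \bar R :=
  ereal_inf [set eps%:E | eps in box_cond distX muX distY muY].

From HB Require Import structures.
From mathcomp Require Import all_boot all_order all_algebra.
From mathcomp Require Import all_classical all_reals all_analysis.
From mathcomp Require Import ring lra measurable_realfun.
Import Order.TTheory GRing.Theory Num.Theory.

(* Write F_X s for diam(X; s).  If a box distortion e is realised by parametrisations
   phi, psi of X and Y, a set A of Y-measure >= t + e pulls back to a set of
   parameters of Lebesgue measure >= t on which the distortion is at most e; the
   closure of its image under phi has X-measure >= t and diameter <= diam A + e.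
   Hence F_X t <= F_Y (t + e) + e, and symmetrically.  Both functions are
   nondecreasing and finite below 1, so comparing them on a grid of mesh h >= e
   shows that their integrals over [0, (Delta + 1) / 2] differ by O(h). *)
Local Open Scope classical_set_scope.
Local Open Scope ring_scope.

Section partial_diameter.
Context {R : realType} {d : measure_display} {T : measurableType d}.
Variables (dist : T -> T -> R) (mu : probability T R).

Lemma ediam_ge0 (A : set T) : (0 <= ediam dist A)%E.
Proof. by apply: ereal_sup_ubound; right. Qed.

Lemma dist_le_ediam {A : set T} {x y} : A x -> A y -> ((dist x y)%:E <= ediam dist A)%E.
Proof. by move=> Ax Ay; apply: ereal_sup_ubound; left; exists x => //; exists y. Qed.

Lemma ediam_le (A : set T) (M : \bar R) : (0 <= M)%E ->
  (forall x y, A x -> A y -> ((dist x y)%:E <= M)%E) -> (ediam dist A <= M)%E.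
Proof. by move=> M0 AM; apply: ge_ereal_sup => _ [[x Ax [y Ay <-]]|->] //; exact: AM. Qed.

Lemma le_ediam (A B : set T) : A `<=` B -> (ediam dist A <= ediam dist B)%E.
Proof.
by move=> AB; apply: ediam_le => [|x y Ax Ay]; [exact: ediam_ge0 | apply: dist_le_ediam; exact: AB].
Qed.

Lemma pdiam_le_ediam {alpha : R} {A : set T} : measurable A -> (alpha%:E <= mu A)%E ->
  (pdiam dist mu alpha <= ediam dist A)%E.
Proof. by move=> mA muA; apply: ereal_inf_lbound; exists A. Qed.

Lemma pdiam_ge0 s : (0 <= pdiam dist mu s)%E.
Proof. by apply: le_ereal_inf_tmp => _ [A _ <-]; exact: ediam_ge0. Qed.

Lemma le_pdiam s t : s <= t -> (pdiam dist mu s <= pdiam dist mu t)%E.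
Proof.
move=> st; apply: le_ereal_inf_tmp => _ [A [mA muA] <-].
by apply: pdiam_le_ediam => //; apply: le_trans muA; rewrite lee_fin.
Qed.

Definition dclosure (S : set T) : set T :=
  [set x | forall r, 0 < r -> exists2 y, S y & dist x y < r].

Hypothesis dist_metric : is_metric dist.
Hypothesis dist_borel : borel_of_dist dist.

Lemma measurable_dopen U : dopen dist U -> measurable U.
Proof. by move=> oU; rewrite dist_borel; exact: sub_sigma_algebra. Qed.

Lemma dopen_dball x r : dopen dist (dball dist x r).
Proof.
case: dist_metric => _ _ dtri y /= xy; exists (r - dist x y); first by rewrite subr_gt0.
by move=> z /= yz; apply: le_lt_trans (dtri x y z) _; rewrite -ltrBrDl.
Qed.

Lemma measurable_dball x r : measurable (dball dist x r).
Proof. exact/measurable_dopen/dopen_dball. Qed.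

Lemma ediam_dball_le x {r : R} : 0 <= r -> (ediam dist (dball dist x r) <= (r *+ 2)%:E)%E.
Proof.
case: dist_metric => _ dsym dtri r0; apply: ediam_le; first by rewrite lee_fin mulrn_wge0.
move=> y z /= xy xz; rewrite lee_fin mulr2n.
by apply: le_trans (dtri y x z) _; rewrite dsym lerD // ltW.
Qed.

Lemma measurable_dclosure S : measurable (dclosure S).
Proof.
case: dist_metric => _ _ dtri.
rewrite -[dclosure S]setCK; apply/measurableC/measurable_dopen.
move=> x /= /existsNP[r /not_implyP[r0 farS]]; exists (r / 2); first by rewrite divr_gt0.
move=> y /= xy yS; apply: farS.
have [s Ss ys] := yS (r / 2) (divr_gt0 r0 (ltr0Sn _ 1)).
by exists s => //; apply: le_lt_trans (dtri x y s) _; rewrite [r](splitr r) ltrD.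
Qed.

Lemma ediam_dclosure S : (ediam dist (dclosure S) <= ediam dist S)%E.
Proof.
case: dist_metric => _ dsym dtri.
case ES : (ediam dist S) => [a| |]; last 2 first.
- exact: leey.
- by have := ediam_ge0 S; rewrite ES.
apply: ediam_le => [|x y Sx Sy]; first by rewrite -ES ediam_ge0.
rewrite lee_fin; apply/ler_addgt0Pr => r r0.
have r20 : 0 < r / 2 by rewrite divr_gt0.
have [u Su xu] := Sx _ r20; have [v Sv yv] := Sy _ r20.
have uva : dist u v <= a by rewrite -lee_fin -ES dist_le_ediam.
have := dtri x u y; have := dtri u v y; rewrite (dsym v y); lra.
Qed.

Lemma exists_dball_measure_ge s : s < 1 ->
  exists x (n : nat), (s%:E <= mu (dball dist x n%:R))%E.
Proof.
move=> s1.
have [x _] : [set: T] !=set0.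
  apply/set0P/eqP => T0; have := probability_setT mu.
  by rewrite T0 measure0 => /esym/eqP; rewrite eqe oner_eq0.
pose B n := dball dist x n%:R.
have B_nd : nondecreasing_seq B.
  by move=> n m nm; apply/subsetPset => y /= xy; apply: lt_le_trans xy _; rewrite ler_nat.
have UB : \bigcup_n B n = setT.
  apply/seteqP; split => // y _; exists (Num.truncn (dist x y)).+1 => //.
  by rewrite /B /dball /= truncnS_gt.
have muB : (mu \o B) @ \oo --> 1%E.
  rewrite -(probability_setT mu) -UB; apply: nondecreasing_cvg_mu => //.
    by move=> n; exact: measurable_dball.
  by rewrite UB.
have muB_nd : nondecreasing_seq (mu \o B).
  move=> n m nm; apply: le_measure; rewrite ?inE; try exact: measurable_dball.
  exact/subsetPset/B_nd.
have := @lte_lim _ _ s muB_nd (cvgP _ muB); rewrite (cvg_lim _ muB) // lte_fin.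
by move=> /(_ s1)[n _ /(_ n (leqnn n)) sB]; exists x, n.
Qed.

Lemma pdiam_lt_pinfty s : s < 1 -> (pdiam dist mu s < +oo)%E.
Proof.
move=> /exists_dball_measure_ge[x [n sB]].
apply: le_lt_trans (pdiam_le_ediam (measurable_dball x n%:R) sB) _.
by apply: le_lt_trans (ediam_dball_le x (ler0n R n)) _; exact: ltry.
Qed.

Lemma pdiam_fin_num s : s < 1 -> pdiam dist mu s \is a fin_num.
Proof. by move=> s1; rewrite ge0_fin_numE ?pdiam_ge0 ?pdiam_lt_pinfty. Qed.

Lemma measurable_pdiam (b : R) : b < 1 -> measurable_fun `[0%R, b] (pdiam dist mu).
Proof.
move=> b1; pose f s := fine (pdiam dist mu (Num.min s b)).
have fin s : pdiam dist mu (Num.min s b) \is a fin_num.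
  by apply: pdiam_fin_num; apply: le_lt_trans b1; rewrite ge_min lexx orbT.
have f_nd : {homo f : x y / x <= y}.
  by move=> x y xy; apply: fine_le => //; apply: le_pdiam; rewrite le_min !ge_min xy lexx orbT.
apply: (eq_measurable_fun (EFin \o f)).
  move=> x; rewrite inE /= in_itv /= => /andP[_ xb].
  by rewrite /f fineK //; congr pdiam; apply/min_idPl.
by apply/measurable_EFinP; exact: nondecreasing_measurable.
Qed.

End partial_diameter.

Lemma measureI_ge d (T : measurableType d) (R : realType) (m : {measure set T -> \bar R})
    (O P J : set T) (t e : R) :
  measurable O -> measurable P -> measurable J -> P `<=` O -> J `<=` O -> m O = 1%E ->
  ((t + e)%:E <= m P)%E -> ((1 - e)%:E <= m J)%E -> (t%:E <= m (P `&` J))%E.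
Proof.
move=> mO mP mJ PO JO mO1 tP eJ.
have mOJ : measurable (O `\` J) by exact: measurableD.
have sub : (m P <= m (P `&` J) + m (O `\` J))%E.
  have mPJ : measurable (P `&` J) by exact: measurableI.
  apply: le_trans _ (measureU2 m mPJ mOJ).
  apply: le_measure; rewrite ?inE //; first exact: measurableU.
  by move=> x Px; have [Jx|nJx] := pselect (J x); [left | right; split => //; exact: PO].
have add : (m J + m (O `\` J))%E = 1%E.
  by rewrite -mO1 -measureU ?setDUK //; apply/seteqP; split => x // [? []].
move: sub add tP eJ.
case: (m J) => [j| |]; case: (m (O `\` J)) => [k| |] //; case: (m P) => [p| |] //;
  case: (m (P `&` J)) => [q| |] //; rewrite ?leey // -!EFinD !lee_fin => + /eqP.
rewrite eqe; lra.
Qed.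

Lemma ediam_image_le {R : realType} {dX dY : measure_display}
    {TX : measurableType dX} {TY : measurableType dY} {I : Type}
    (distX : TX -> TX -> R) (distY : TY -> TY -> R)
    (f : I -> TX) (g : I -> TY) (S : set I) (e : R) :
  0 <= e -> (forall s t, S s -> S t -> `|distX (f s) (f t) - distY (g s) (g t)| <= e) ->
  (ediam distX (f @` S) <= ediam distY (g @` S) + e%:E)%E.
Proof.
move=> e0 fg; apply: ediam_le => [|_ _ [s Ss <-] [t St <-]].
  by apply: adde_ge0; [exact: ediam_ge0 | rewrite lee_fin].
apply: le_trans _ (leeD2r _ (dist_le_ediam distY (imageP g Ss) (imageP g St))).
by rewrite -EFinD lee_fin; have := fg s t Ss St; rewrite ler_norml => /andP[_]; lra.
Qed.

Lemma box_cond_sym {R : realType} {dX dY : measure_display}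
    {TX : measurableType dX} {TY : measurableType dY}
    {distX : TX -> TX -> R} {muX : probability TX R}
    {distY : TY -> TY -> R} {muY : probability TY R} {e : R} :
  box_cond distX muX distY muY e -> box_cond distY muY distX muX e.
Proof.
case=> e0 [phi [psi [I0 [phiP psiP I0P I0ge dis]]]]; split => //.
by exists psi, phi, I0; split => // s t Is It; rewrite distrC; exact: dis.
Qed.

Lemma pdiam_le_box {R : realType} {dX dY : measure_display}
    {TX : measurableType dX} {TY : measurableType dY}
    {distX : TX -> TX -> R} {muX : probability TX R}
    {distY : TY -> TY -> R} {muY : probability TY R} {e t : R} :
  is_metric distX -> borel_of_dist distX -> box_cond distX muX distY muY e ->
  (pdiam distX muX t <= pdiam distY muY (t + e) + e%:E)%E.
Proof.
move=> mX bX [e0 [phi [psi [I0 [[mphi phiE] [mpsi psiE] [mI0 I0sub] I0ge dis]]]]].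
rewrite -leeBlDr //; apply: le_ereal_inf_tmp => _ [A [mA Ae] <-]; rewrite leeBlDr //.
pose J := (`[0%R, 1%R[ `&` psi @^-1` A) `&` I0.
have mJ : measurable J by apply: measurableI => //; exact: mpsi.
have Jt : (t%:E <= lebesgue_measure J)%E.
  have leb01 : (@lebesgue_measure R `[0%R, 1%R[ = 1)%E.
    by rewrite lebesgue_measure_itv /= lte01 oppr0 adde0.
  apply: (@measureI_ge _ _ _ lebesgue_measure `[0%R, 1%R[) => //; last exact: I0ge.
  - exact: mpsi.
  - by rewrite -(psiE A mA) in Ae.
(* [phi @` J] need not be measurable; its closure is, and is no larger in diameter. *)
pose B := dclosure distX (phi @` J).
have muB : (t%:E <= muX B)%E.
  rewrite -phiE; last exact: measurable_dclosure.
  apply: le_trans Jt _; apply: le_measure; rewrite ?inE //.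
    by apply: mphi => //; exact: measurable_dclosure.
  move=> s Js; split; first by case: Js => -[].
  by move=> r r0; exists (phi s); [exists s | case: mX => d0 _ _; rewrite (proj2 (d0 _ _) erefl)].
apply: le_trans (pdiam_le_ediam _ _ (measurable_dclosure _ mX bX _) muB) _.
apply: le_trans (ediam_dclosure _ mX _) _.
have disJ s u : J s -> J u -> `|distX (phi s) (phi u) - distY (psi s) (psi u)| <= e.
  by move=> [_ Is] [_ Iu]; exact: dis.
apply: le_trans (ediam_image_le _ _ _ _ _ _ e0 disJ) _.
by apply: leeD2r; apply: le_ediam => _ [s [[_ As] _] <-].
Qed.

Section nondecreasing_integral.
Context {R : realType}.
Local Notation leb := (@lebesgue_measure R).

Lemma nondecreasing_integral_le (f : R -> \bar R) (D : set R) (b : R) :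
  measurable D -> (forall x, D x -> x <= b) -> (forall x, 0 <= f x)%E ->
  {homo f : x y / x <= y >-> (x <= y)%E} -> measurable_fun D f ->
  (\int[leb]_(x in D) f x <= f b * leb D)%E.
Proof.
move=> mD Db f0 f_nd mf; rewrite -integral_cst //.
by apply: ge0_le_integral => // x Dx; apply: f_nd; exact: Db.
Qed.

Lemma nondecreasing_integral_ge (f : R -> \bar R) (D : set R) (a : R) :
  measurable D -> (forall x, D x -> a <= x) -> (forall x, 0 <= f x)%E ->
  {homo f : x y / x <= y >-> (x <= y)%E} -> measurable_fun D f ->
  (f a * leb D <= \int[leb]_(x in D) f x)%E.
Proof.
move=> mD Da f0 f_nd mf; rewrite -integral_cst //.
by apply: ge0_le_integral => // [x _|x Dx]; [exact: f0 | apply: f_nd; exact: Da].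
Qed.

Variables F G : R -> \bar R.
Hypotheses (F0 : forall x, (0 <= F x)%E) (G0 : forall x, (0 <= G x)%E).
Hypotheses (F_nd : {homo F : x y / x <= y >-> (x <= y)%E})
  (G_nd : {homo G : x y / x <= y >-> (x <= y)%E}).

(* A Riemann-sum comparison: [G] on [`]kh, (k+1)h]] is bounded by [F] on
   [`](k+1)h, (k+2)h]] plus [e], which stands in for translation invariance. *)
Lemma integral_le_shift (h e : R) (N : nat) : 0 < h -> 0 <= e ->
  (forall s, (G s <= F (s + h) + e%:E)%E) ->
  measurable_fun `[0%R, N%:R * h] F -> measurable_fun `[0%R, N%:R * h] G ->
  (\int[leb]_(x in `[0%R, (N%:R * h)%R]) G x <= \int[leb]_(x in `[0%R, (N%:R * h)%R]) F x
     + F (N%:R * h)%R * h%:E + F (N%:R * h + h)%R * h%:E + (N%:R * h * e)%:E)%E.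
Proof.
move=> h0 e0 GF; have hE : (0 <= h%:E)%E by rewrite lee_fin ltW.
elim: N => [|k IH] mF mG.
  rewrite !mul0r in mG *; apply: (@le_trans _ _ 0%E).
    have := nondecreasing_integral_le G _ 0 (measurable_itv `[0%R, 0%R]) _ G0 G_nd mG.
    rewrite lebesgue_measure_itv /= lte_fin ltxx mule0; apply.
    by move=> x; rewrite /= in_itv /= => /andP[].
  apply: adde_ge0; last by rewrite lee_fin.
  by rewrite -addeA adde_ge0 ?integral_ge0 // adde_ge0 // mule_ge0.
have kS : k.+1%:R * h = k%:R * h + h by rewrite -natr1 mulrDl mul1r.
rewrite kS; set a := k%:R * h in IH kS *; set b := a + h in kS *.
have [mFb mGb] : measurable_fun `[0%R, b] F /\ measurable_fun `[0%R, b] G.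
  by rewrite -kS.
have a0 : 0 <= a by rewrite mulr_ge0 // ltW.
have ab : a <= b by rewrite lerDl ltW.
have split0b : `[0, b]%classic = `[0, a]%classic `|` `]a, b]%classic.
  by apply: itv_bndbnd_setU; rewrite bnd_simp.
have sub0a : `[0%R, a] `<=` `[0%R, b] by apply: subitvP; rewrite subitvE !bnd_simp.
have subab : `]a, b] `<=` `[0%R, b] by apply: subitvP; rewrite subitvE !bnd_simp a0.
have disj : [disjoint `[0, a]%classic & `]a, b]%classic].
  rewrite disj_set2E; apply/eqP/seteqP; split => // x [].
  by rewrite /= !in_itv /= => /andP[_ xa] /andP[ax _]; move: (lt_le_trans ax xa); rewrite ltxx.
have lebab : leb `]a, b] = h%:E.
  by rewrite lebesgue_measure_itv /= lte_fin ltrDl h0 -EFinD addrAC subrr add0r.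
have IHa := IH (measurable_funS (measurable_itv _) sub0a mFb)
  (measurable_funS (measurable_itv _) sub0a mGb).
have intG : (\int[leb]_(x in `]a, b]) G x <= F (b + h) * h%:E + (e * h)%:E)%E.
  apply: le_trans (nondecreasing_integral_le G _ b (measurable_itv _) _ G0 G_nd _) _.
  - by move=> x; rewrite /= in_itv /= => /andP[].
  - exact: measurable_funS (measurable_itv _) subab mGb.
  by rewrite lebab EFinM -ge0_muleDl // lee_wpmul2r.
have intF : (F a * h%:E <= \int[leb]_(x in `]a, b]) F x)%E.
  rewrite -lebab; apply: nondecreasing_integral_ge F0 F_nd _ => //.
  - by move=> x; rewrite /= in_itv /= => /andP[/ltW].
  - exact: measurable_funS (measurable_itv _) subab mFb.
rewrite split0b !ge0_integral_setU //; [|by rewrite -split0b..].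
have be : (b * e)%:E = (a * e)%:E + (e * h)%:E by rewrite -EFinD mulrDl [h * e]mulrC.
have AC (x1 x2 x3 x4 x5 x6 : \bar R) :
    (x1 + x2 + x3 + x4 + (x5 + x6) = x1 + x2 + x3 + x5 + (x4 + x6))%E.
  by rewrite -!addeA; congr (_ + (_ + (_ + _))); rewrite addeCA.
apply: le_trans (leeD IHa intG) _.
by rewrite be AC; do 3 apply: leeD2r; exact: leeD2l.
Qed.

End nondecreasing_integral.

Lemma integral_pdiam_fin_num {R : realType} {d : measure_display} {T : measurableType d}
    (dist : T -> T -> R) (mu : probability T R) (c : R) :
  is_metric dist -> borel_of_dist dist -> c < 1 ->
  (\int[lebesgue_measure]_(x in `[0%R, c]) pdiam dist mu x)%E \is a fin_num.
Proof.
move=> mX bX c1; rewrite ge0_fin_numE; last by apply: integral_ge0 => x _; exact: pdiam_ge0.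
have := nondecreasing_integral_le _ `[0%R, c] c (measurable_itv _) _ (pdiam_ge0 dist mu)
  (le_pdiam dist mu) (measurable_pdiam dist mu mX bX _ c1).
have Dc x : `[0%R, c]%classic x -> x <= c by rewrite /= in_itv /= => /andP[].
move=> /(_ Dc)/le_lt_trans; apply.
rewrite lebesgue_measure_itv; case: ifP => _; last by rewrite mule0 ltry.
by rewrite -EFinD -(fineK (pdiam_fin_num dist mu mX bX _ c1)) -EFinM ltry.
Qed.

Lemma integral_pdiam_le_box {R : realType} {dX dY : measure_display}
    {TX : measurableType dX} {TY : measurableType dY}
    {distX : TX -> TX -> R} {muX : probability TX R}
    {distY : TY -> TY -> R} {muY : probability TY R} {N : nat} {h e B : R} :
  is_metric distX -> borel_of_dist distX -> is_metric distY -> borel_of_dist distY ->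
  box_cond distX muX distY muY e -> 0 < h -> e <= h -> N%:R * h < 1 ->
  (pdiam distY muY (N%:R * h + h) <= B%:E)%E ->
  (\int[lebesgue_measure]_(x in `[0%R, (N%:R * h)%R]) pdiam distX muX x <=
   \int[lebesgue_measure]_(x in `[0%R, (N%:R * h)%R]) pdiam distY muY x
     + ((2 * B + N%:R * h) * h)%:E)%E.
Proof.
move=> mX bX mY bY be h0 eh c1 FB; have e0 : 0 <= e by case: be.
have GF s : (pdiam distX muX s <= pdiam distY muY (s + h) + e%:E)%E.
  apply: le_trans (pdiam_le_box mX bX be) _.
  by apply: leeD2r; apply: le_pdiam; rewrite lerD2l.
apply: le_trans (integral_le_shift _ _ (pdiam_ge0 _ _) (pdiam_ge0 _ _) (le_pdiam _ _)
  (le_pdiam _ _) _ _ _ h0 e0 GF (measurable_pdiam _ _ mY bY _ c1)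
  (measurable_pdiam _ _ mX bX _ c1)) _.
set IY := (\int[lebesgue_measure]_(x in `[0%R, (N%:R * h)%R]) pdiam distY muY x)%E.
rewrite -2!addeA; apply: leeD2l.
have hE : (0 <= h%:E)%E by rewrite lee_fin ltW.
have FcB : (pdiam distY muY (N%:R * h) <= B%:E)%E.
  by apply: le_trans FB; apply: le_pdiam; rewrite lerDl ltW.
rewrite (_ : (2 * B + N%:R * h) * h = B * h + (B * h + N%:R * h * h)); last by ring.
rewrite 2!EFinD; apply: leeD; first by rewrite EFinM; exact: lee_wpmul2r.
apply: leeD; first by rewrite EFinM; exact: lee_wpmul2r.
by rewrite lee_fin ler_wpM2l // mulr_ge0 // ltW.
Qed.

Lemma exists_step_lt {R : realType} (c m : R) : 0 < m -> exists N : nat, c / N.+1%:R < m.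
Proof.
by move=> m0; exists (Num.truncn (c / m)); rewrite ltr_pdivrMr // -ltr_pdivrMl // mulrC truncnS_gt.
Qed.

Lemma abse_sub_le {R : realType} {x y : \bar R} {a : R} : x \is a fin_num ->
  (x <= y + a%:E)%E -> (y <= x + a%:E)%E -> (`|x - y| <= a%:E)%E.
Proof.
case: x y => [x| |] [y| |] //= _; rewrite -?EFinD ?leye_eq ?leeNy_eq //.
by rewrite !lee_fin ler_norml => xy yx; apply/andP; split; lra.
Qed.

Theorem lemma3p8 (R : realType) (Delta : R) (hD0 : 0 < Delta) (hD1 : Delta < 1)
  (dX : measure_display) (TX : measurableType dX)
  (distX : TX -> TX -> R) (muX : probability TX R)
  (hX : is_mmspace distX muX) (hXD : in_XDelta muX Delta) :
  forall eps : R, 0 < eps ->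
  exists2 delta : R, 0 < delta &
  forall (dY : measure_display) (TY : measurableType dY)
    (distY : TY -> TY -> R) (muY : probability TY R),
    is_mmspace distY muY -> in_XDelta muY Delta ->
    (box_dist distX muX distY muY < delta%:E)%E ->
    (`|rDelta distX muX Delta - rDelta distY muY Delta| < eps%:E)%E.
Proof.
move=> eps eps0; case: hX => mX _ _ bX _.
set c := (Delta + 1) / 2; set r := (1 - c) / 3.
have c0 : 0 < c by rewrite divr_gt0 // addr_gt0.
have c1 : c < 1 by rewrite ltr_pdivrMr // mul1r; lra.
have r0 : 0 < r by rewrite divr_gt0 // subr_gt0.
have EM : pdiam distX muX (c + 2 * r) = (fine (pdiam distX muX (c + 2 * r)))%:E.
  by rewrite fineK // pdiam_fin_num // /r; lra.
set M := fine _ in EM; have M0 : 0 <= M by rewrite -lee_fin -EM pdiam_ge0.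
set K := 2 * (M + r) + c; have K0 : 0 < K by rewrite /K; lra.
have m0 : 0 < Num.min r (eps / K) by rewrite lt_min r0 divr_gt0.
have [N] := exists_step_lt c _ m0.
set h := c / N.+1%:R; rewrite lt_min => /andP[/ltW hr]; rewrite ltr_pdivlMr // => hK.
have h0 : 0 < h by rewrite divr_gt0.
have cNh : N.+1%:R * h = c by rewrite mulrC divfK.
have Nh1 : N.+1%:R * h < 1 by rewrite cNh.
exists h => // dY TY distY muY [mY _ _ bY _] _ /ereal_inf_lt[_ [e be <-]].
rewrite lte_fin => /ltW eh.
have BX : (pdiam distX muX (N.+1%:R * h + h) <= (M + r)%:E)%E.
  rewrite cNh; apply: (@le_trans _ _ M%:E); last by rewrite lee_fin; lra.
  by rewrite -EM; apply: le_pdiam; lra.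
have BY : (pdiam distY muY (N.+1%:R * h + h) <= (M + r)%:E)%E.
  apply: le_trans (pdiam_le_box mY bY (box_cond_sym be)) _.
  rewrite EFinD -EM; apply: leeD; last by rewrite lee_fin; lra.
  by apply: le_pdiam; rewrite cNh; lra.
have IX := integral_pdiam_le_box mX bX mY bY be h0 eh Nh1 BY.
have IY := integral_pdiam_le_box mY bY mX bX (box_cond_sym be) h0 eh Nh1 BX.
rewrite /rDelta -/c -cNh.
apply: le_lt_trans (abse_sub_le (integral_pdiam_fin_num _ _ _ mX bX Nh1) IX IY) _.
by rewrite lte_fin cNh mulrC.
Qed.
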